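(* For every $t \in \mathbb{N}_0$ and every integer $b \ge 2$, the cyclotomic polynomial $\Phi_b(x)$ does not divide \[ Q_t(x) = x^{4t+7} - x^{4t+5} - x^{4t+4} + 2x^{2t+4} + x^{2t+3} + x^{2t+2} + x^{2t} - 2x^{t+3} - x^2 - 1. \]
   Context: $\Phi_b(x) = \prod_\zeta (x-\zeta)$, where $\zeta$ ranges over the primitive $b$-th roots of unity, is the $b$-th cyclotomic polynomial. *)

From mathcomp Require Import all_boot all_order all_algebra all_field.
Set Implicit Arguments. Unset Strict Implicit. Unset Printing Implicit Defensive.
Import GRing.Theory Num.Theory.
Local Open Scope ring_scope.

Definition Qt (t : nat) : {poly int} :=
  'X^(4*t+7) - 'X^(4*t+5) - 'X^(4*t+4) + 2%:P * 'X^(2*t+4) + 'X^(2*t+3)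
  + 'X^(2*t+2) + 'X^(2*t) - 2%:P * 'X^(t+3) - 'X^2 - 1.

(* Let w be a primitive b-th root of unity with Q_t(w) = 0 and put y = w^t.  Since w^-1
   is also a primitive b-th root of unity, Q_t(w^-1) = 0 as well, so y is a common root of
   two quartics over Z[w].  Eliminating y (an explicit resultant identity) gives
   w^10 (w - 1)^2 S(w) = 0 for a fixed integer polynomial S of degree 34, hence S vanishes
   at every primitive b-th root of unity.  But S vanishes at w and at another primitive
   root determined by w: at w^2 if b is odd, at w^(b/2+2) = -w^2 if b = 2 (mod 4), and at
   w^(b/2+1) = -w if 4 | b; explicit Bezout identities with nonzero integer right-hand side
   show that S(x) is coprime to S(x^2), S(-x^2) and S(-x) respectively. *)

From mathcomp Require Import all_boot all_order all_algebra all_field.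
From mathcomp Require Import ssrZ ring.
From Stdlib Require BinNums BinInt.
Set Implicit Arguments. Unset Strict Implicit. Unset Printing Implicit Defensive.
Import GRing.Theory.
Local Open Scope ring_scope.

Local Notation Z := BinNums.Z.

Section CoefficientLists.
Variables (C : Type) (R : comNzRingType) (f : C -> R).
Variables (c0 : C) (cadd cmul : C -> C -> C) (copp : C -> C) (czero : pred C).
Hypothesis f0 : f c0 = 0.
Hypothesis fD : {morph f : a b / cadd a b >-> a + b}.
Hypothesis fM : {morph f : a b / cmul a b >-> a * b}.
Hypothesis fN : {morph f : a / copp a >-> - a}.
Hypothesis f_czero : forall a, czero a -> f a = 0.

Fixpoint lhorner (p : seq C) (x : R) : R :=
  if p is a :: q then f a + x * lhorner q x else 0.

Fixpoint ladd (p q : seq C) : seq C :=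
  match p, q with
  | [::], _ => q
  | _, [::] => p
  | a :: p', b :: q' => cadd a b :: ladd p' q'
  end.

Fixpoint lmul (p q : seq C) : seq C :=
  if p is a :: p' then ladd (map (cmul a) q) (c0 :: lmul p' q) else [::].

Definition lsub (p q : seq C) : seq C := ladd p (map copp q).

Lemma lhornerD p q x : lhorner (ladd p q) x = lhorner p x + lhorner q x.
Proof.
elim: p q => [|a p IHp] [|b q] /=; rewrite ?add0r ?addr0 //.
by rewrite IHp fD mulrDr addrACA.
Qed.

Lemma lhornerZ a p x : lhorner (map (cmul a) p) x = f a * lhorner p x.
Proof.
elim: p => [|b p IHp] /=; first by rewrite mulr0.
by rewrite IHp fM mulrDr mulrCA.
Qed.

Lemma lhornerM p q x : lhorner (lmul p q) x = lhorner p x * lhorner q x.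
Proof.
elim: p => [|a p IHp] /=; first by rewrite mul0r.
by rewrite lhornerD lhornerZ /= f0 IHp add0r mulrDl mulrA.
Qed.

Lemma lhornerN p x : lhorner (map copp p) x = - lhorner p x.
Proof.
elim: p => [|a p IHp] /=; first by rewrite oppr0.
by rewrite IHp fN opprD mulrN.
Qed.

Lemma lhornerB p q x : lhorner (lsub p q) x = lhorner p x - lhorner q x.
Proof. by rewrite lhornerD lhornerN. Qed.

Lemma lhorner_all0 p x : all czero p -> lhorner p x = 0.
Proof.
elim: p => [|a p IHp] //= /andP[/f_czero -> /IHp ->].
by rewrite mulr0 addr0.
Qed.

Lemma lhorner_eq p q x : all czero (lsub p q) -> lhorner p x = lhorner q x.
Proof. by move=> /(lhorner_all0 x)/eqP; rewrite lhornerB subr_eq0 => /eqP. Qed.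

End CoefficientLists.

Section IntegerPolynomials.
Variable R : comNzRingType.

Definition zR (a : Z) : R := (int_of_Z a)%:~R.

Lemma zRD : {morph zR : a b / BinInt.Z.add a b >-> a + b}.
Proof. by move=> a b; rewrite /zR -rmorphD -(rmorphD int_of_Z). Qed.

Lemma zRM : {morph zR : a b / BinInt.Z.mul a b >-> a * b}.
Proof. by move=> a b; rewrite /zR -rmorphM -(rmorphM int_of_Z). Qed.

Lemma zRN : {morph zR : a / BinInt.Z.opp a >-> - a}.
Proof. by move=> a; rewrite /zR -rmorphN -(rmorphN int_of_Z). Qed.

Definition zhorner (p : seq Z) (x : R) : R := lhorner zR p x.
Definition zadd : seq Z -> seq Z -> seq Z := ladd BinInt.Z.add.
Definition zmul : seq Z -> seq Z -> seq Z := lmul BinNums.Z0 BinInt.Z.add BinInt.Z.mul.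
Definition zsub : seq Z -> seq Z -> seq Z := lsub BinInt.Z.add BinInt.Z.opp.
Definition zeq0 : pred (seq Z) := all (BinInt.Z.eqb ^~ BinNums.Z0).

Lemma zhornerD p q x : zhorner (zadd p q) x = zhorner p x + zhorner q x.
Proof. exact/lhornerD/zRD. Qed.

Lemma zhornerM p q x : zhorner (zmul p q) x = zhorner p x * zhorner q x.
Proof. exact/lhornerM/zRM/zRD. Qed.

Lemma zhornerN p x : zhorner (map BinInt.Z.opp p) x = - zhorner p x.
Proof. exact/lhornerN/zRN. Qed.

Lemma zhorner_eq0 p x : zeq0 p -> zhorner p x = 0.
Proof. by apply: lhorner_all0 => a /BinInt.Z.eqb_spec ->. Qed.

Lemma zhorner_eq p q x : zeq0 (zsub p q) -> zhorner p x = zhorner q x.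
Proof.
by apply: lhorner_eq => [|a|a /BinInt.Z.eqb_spec ->]; [exact: zRD|exact: zRN|].
Qed.

Fixpoint zcomp_sqr (p : seq Z) : seq Z :=
  if p is a :: q then a :: BinNums.Z0 :: zcomp_sqr q else [::].

Fixpoint zcomp_opp (p : seq Z) : seq Z :=
  if p is a :: q then a :: map BinInt.Z.opp (zcomp_opp q) else [::].

Lemma zhorner_comp_sqr p x : zhorner (zcomp_sqr p) x = zhorner p (x ^+ 2).
Proof.
elim: p => [|a p IHp] //=; rewrite /zhorner /= -!/(zhorner _ _) IHp.
by rewrite [zR BinNums.Z0]/zR add0r mulrA -expr2.
Qed.

Lemma zhorner_comp_opp p x : zhorner (zcomp_opp p) x = zhorner p (- x).
Proof.
elim: p => [|a p IHp] //=; rewrite /zhorner /= -!/(zhorner _ _).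
by rewrite zhornerN IHp mulrN mulNr.
Qed.

End IntegerPolynomials.

Lemma zhorner_no_common_root (R : numDomainType) u v p q N (x : R) :
  zeq0 (zsub (zadd (zmul u p) (zmul v q)) [:: N]) -> N <> BinNums.Z0 ->
  zhorner p x = 0 -> zhorner q x = 0 -> False.
Proof.
move=> /(zhorner_eq x); rewrite zhornerD !zhornerM => bezout N0 px0 qx0.
move: bezout; rewrite px0 qx0 !mulr0 addr0 /zhorner /= mulr0 addr0 /zR.
move/esym/eqP; rewrite intr_eq0 => /eqP NZ; apply: N0.
by apply: (can_inj int_of_ZK); rewrite NZ.
Qed.

(* Turns the images under [zR] of integer literals into numerals that [ring] handles. *)
Ltac zhorner_literal :=
  rewrite /= /zR;
  cbv [int_of_Z BinPos.Pos.to_nat BinPos.Pos.iter_op Nat.add predn Nat.pred].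

Section BivariateIntegerPolynomials.
Variables (R : comNzRingType) (x : R).

Definition zzhorner (P : seq (seq Z)) (y : R) : R := lhorner (fun p => zhorner p x) P y.
Definition zzadd : seq (seq Z) -> seq (seq Z) -> seq (seq Z) := ladd zadd.
Definition zzmul : seq (seq Z) -> seq (seq Z) -> seq (seq Z) := lmul [::] zadd zmul.
Definition zzsub : seq (seq Z) -> seq (seq Z) -> seq (seq Z) := lsub zadd (map BinInt.Z.opp).
Definition zzeq0 : pred (seq (seq Z)) := all zeq0.

Lemma zzhornerD P Q y : zzhorner (zzadd P Q) y = zzhorner P y + zzhorner Q y.
Proof. by apply: lhornerD => p q; apply: zhornerD. Qed.

Lemma zzhornerM P Q y : zzhorner (zzmul P Q) y = zzhorner P y * zzhorner Q y.
Proof. by apply: lhornerM => // p q; [apply: zhornerD | apply: zhornerM]. Qed.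

Lemma zzhorner_eq P Q y : zzeq0 (zzsub P Q) -> zzhorner P y = zzhorner Q y.
Proof.
apply: lhorner_eq => [p q|p|p]; [exact: zhornerD|exact: zhornerN|exact: zhorner_eq0].
Qed.

Lemma zzhorner_const p y : zzhorner [:: p] y = zhorner p x.
Proof. by rewrite /zzhorner /= mulr0 addr0. Qed.

End BivariateIntegerPolynomials.

(* Coefficients are listed by increasing degree.  [Qy] and [Qy_rev] are Q_t(x) and
   x^(4t+7) Q_t(x^-1) as polynomials in y = x^t over Z[x] (see [zzhorner_Qy] and
   [zzhorner_Qy_rev]); [S] is the essential factor of their resultant in y. *)
Section Certificates.
Import BinInt.
Local Open Scope Z_scope.

Definition Qy : seq (seq Z) := [:: [:: (-1); 0; (-1)];
  [:: 0; 0; 0; (-2)];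
  [:: 1; 0; 1; 1; 2];
  [::];
  [:: 0; 0; 0; 0; (-1); (-1); 0; 1]].
Definition Qy_rev : seq (seq Z) := [:: [:: 1; 0; (-1); (-1)];
  [::];
  [:: 0; 0; 0; 2; 1; 1; 0; 1];
  [:: 0; 0; 0; 0; (-2)];
  [:: 0; 0; 0; 0; 0; (-1); 0; (-1)]].
Definition res_u : seq (seq Z) := [:: [:: 0; 0; 0; 0; 0; 0; 0; 0; 0; 0; 0; 0; 0; (-2); 0; 9; 14; 10; 24; 21; (-39); (-78); (-9); 54; 42; (-91); (-87); 3; 122; 55; (-27); (-35); 0; 24; (-8); (-7); (-4); 8; 0; (-1); (-2); (-2); (-1); 0; (-1)];
  [:: 0; 0; 0; 0; 0; 0; 0; 0; 0; 0; 0; 0; 0; 0; 2; 0; (-8); (-20); (-12); 4; 22; (-10); (-28); 0; 80; 60; 52; (-36); (-10); (-4); 34; (-26); (-58); (-68); (-76); (-18); (-4); 18; 22; 32; 14; 12; 12; 4; 0; 2];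
  [:: 0; 0; 0; 0; 0; 0; 0; 0; 0; 0; 0; 0; 0; 0; 0; 1; 0; (-3); (-3); (-8); (-40); (-66); (-21); 31; 36; (-1); 24; 47; 84; 21; (-40); (-19); 35; 51; 12; (-7); (-37); (-27); (-17); (-17); (-3); 1; (-3); 0; 1];
  [:: 0; 0; 0; 0; 0; 0; 0; 0; 0; 0; 0; 0; 0; 0; 0; 0; 0; 0; 0; 2; 0; (-10); (-24); (-14); (-6); 10; 4; 12; (-10); 32; 2; 14; (-8); 6; 20; 28; 28; (-10); (-2); (-20); (-14); (-8); (-10); (-4); 0; (-2)]].
Definition res_v : seq (seq Z) := [:: [:: 0; 0; 0; 0; 0; 0; 0; 0; 0; 0; 1; 0; (-3); (-7); (-9); (-21); (-25); (-23); (-13); 9; 68; 59; 11; (-47); 36; 75; 100; (-81); (-104); (-27); 66; 37; (-55); (-58); (-44); 24; 5; 7; 20; 7; 2; 6];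
  [:: 0; 0; 0; 0; 0; 0; 0; 0; 0; 0; 0; 0; 0; 0; 2; 0; (-8); (-18); (-10); (-14); 2; 18; 24; (-68); (-62); (-2); 110; 44; (-32); (-60); 42; 122; 68; 16; (-14); (-2); (-30); (-32); (-28); (-20); (-8); (-4); (-4)];
  [:: 0; 0; 0; 0; 0; 0; 0; 0; 0; 0; 0; 0; 0; 0; (-1); (-1); 4; 12; 11; 9; 16; 18; (-10); (-43); (-46); (-13); (-5); (-19); (-16); 37; 47; 8; (-37); (-18); 31; 37; 1; (-24); (-8); 1; 1; 0; (-1); 0; 1];
  [:: 0; 0; 0; 0; 0; 0; 0; 0; 0; 0; 0; 0; 0; 0; 0; 0; 0; 0; (-2); (-2); 12; 38; 26; (-28); (-54); 0; 32; 8; (-50); (-30); 24; 56; (-20); (-68); (-36); 18; 38; 22; 12; 2; 8; (-4); (-8); 0; 0; (-2)]].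
Definition S : seq Z := [:: 1; 2; (-1); (-10); (-25); (-58); (-114); (-182); (-255); (-302); (-230); (-38); 136; 160; 117; 222; 483; 640; 483; 222; 117; 160; 136; (-38); (-230); (-302); (-255); (-182); (-114); (-58); (-25); (-10); (-1); 2; 1].
Definition u_sqr : seq Z := [:: 12056554412140079730015694751251010690604869954889041736499175383089895207; (-21465744617118087057027270440645933411315850825896202710570158684338901892); 49306083549325301088680353484903912241282907503838333357774633815294304079; (-75157102173868763063711288804315051385909738231136671564805429420413694722); 102277458217779634484695153379713980414574658690685278538195210012845141852; (-178805221810460183162478423897556673713329194348652040274833431600042822398); 199337797865175682871176373913760296573257842532672156513164873919459434435; (-351937610885596404834481886391100210544317968901469171212656474939725382988); 330631349491423954931937071425332801494089521564518268191738894321558493828; (-596619009045547509867165387026751428601943402175218097164945456682177698308); 464308001487366507828132069876294921660524752846231825791997746933504911498; (-961766054176421142303584096232871506502652098793027628043252084691702925038); 710131986716479879514333923616304766576221161532473768995078771443960959949; (-1573394687049599523529944569883115811782076581159194524613620685183386006672); 1158080090807157765600160799762120037824598997555724709288120007902554456866; (-2240850524814145802181340981110774518730434803444656506096960183416159551002); 1338246588512927476435498795789518519382005029267211632979724336061726050546; (-2253470995957522225483897727002234818137210197690819954844213483751261221274); 717624128072913366386728959550827723461718297419739097555948504667906451309; (-1068501567643143223987687651539509808463091870323551711175270466606080665878); (-376795126128299092209257534204559554752663856968797312509995674563375476843); 564764831726480762660582319245858430928289612267633992268754489324302343430; (-905061539542950222528957686700516021399630958231926650794456117423006054825); 1268575219296643995404919441334665233163226394127440846641969210940123836330;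 (-512547193112883199488244757160719232921808654213244134481633464060008578228); 904017251139903312079421933628177871940716323608191226737061158196473953856; (-278216145667458568424558078635085087071653327319088318047160376716362295179); 1010452909442318547806109942792028016177955421299849151073449410256721452128; (-1187132559217235149998190902566269061808132201795279857633406319839995271638); 2665430990860268436667046932724898862876922553875447205413714827269086566610; (-2537431912289067995218093760703654249468950796638989997690417606523883054817); 4503028121880152708247518988417060158439059250216080401567795519552427103866; (-2636133220045646535792745199924985829230613021536898661319759319971549907747); 4516067478080397464512726816305525300620612890348811893444516142104579006356; (-1462726121414168469355561346282189569176064628779521799163623104112747916265); 2724504665721946904170479440874026561325763145911484349163516490790009237554; (-467569528306482529881974698788817705494518893769571015133845455504203673589); 1230258846199074885831469546240597909074203685435351652120811697061380960130; (-472872282541727519979289782519766127088629299536699226586473992281211102512); 1074549655116396636601012129531621170482822545752125304670869283602839480428; (-767054520506818424651377070382837219062866527610558384614733570810033200711); 1267660834369753244125546416664893972949278688608927941919817642674930872600; (-408972665459845287133631772412760786725250795968151637652148574201651845740); 529055482016105823860125653274331648520424763561407403032760952860739774096; 478669336106793301306805799975434502268984566183419815920455965931827287419; (-952061952252345183601941625331983996315146033725374156217655976853039695678); 1134022075386285906203904065224396767220519193598491081196351704600889185977; (-2039826136456358284485816007603379162117939901730464996608030429673371211724); 1190075568782420367560146062156217480347273278507285654427555161068039699850; (-2204438236279888694387802682548809526468756719781268192367586035779185996208); 942790082233992527603157059725395039036947930510669020627477834157608245210; (-1758073388315402683172497879348454511776140377553584184905442959122079943904); 648630508756741070226389965268001902321695460434383023847513337507103089050;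 (-1196739591351625902453040038521863221085868960968569208099785036878040350130); 372773925782882906513462152780698961187914875955337257491819121665063986707; (-701107918812669891929052855442623646542765811831238862444378611083796768238); 178067895250575730048765442391991278613606028490598419130645679827177752608; (-345571846089883015822393318371145249104793491979713972147276432191866308484); 79404980323296706415039765485408701621080935124921797741125087696817740491; (-145989546881170021252708751636843771098628797132621170118108847695872258948); 24181333140001552704287042462581964908800440326459189794925984192764254782; (-46493330463594016671826829165152069436832654794358596593201598788012542388); (-4191097224860820290665903927554608780836513621432400334864861837626982709); 2874329482368245478744157245438957645355793524987837949972273533047607472; (-7129828810211636053778832705783527793360591716614582905009310846380270087); 11929428692677241735881867407755521047150827382540447035962134747020275698; (-1753743696392464618507998529148255167938183595692959442440711502211644925); 4471545838332337818717034725198963207143562065469982516694719159444458292].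
Definition v_sqr : seq Z := [:: 24068721122776251468362537481723817366672131500034009898521367138220954509; (-2647364207162072403004119061856087969893889083881880762428192081840888522); (-42455482148501550181335192815808669461390598897224905997177875339968514106); 80939462993825015935488497030083576337864550114217981028534141100066913786; 293078929231383667242560365201977124039944295183174236148845198195292895647; 390264288975645505657427784617239828037662411198369655344585651135648543374; 483139056775582884449748544023140660439028462832046542309190940103938990520; 799191926665675454279619882150803950540565030354830498677171169124029432576; 1274867383068366804528916944828836092481907076814625931986117797539105169746; 1146961782859424879108424672650836471698863558470675578214351146523244456636; 196161279906330923252800514672475962334313877108752381096869689324846225322; (-739046664828532446732880388560483471892355826176368813955401237511669447892); (-662479699236214593344712672877446495265809026337570786833835912230053904212); (-109298716256177973987271208737614876365168307098197274159461027670150840864); (-570180108927753538383220103987288716098500474764060196226222334088047449495); (-1807163005693966206026331766808246374671675684107334910090000341708699777278); (-2592623522667405588810333362744312191816992816307697619632044660686153460952); (-1885474210638142307629007187901701406732228037922250631384444075782104396050); (-766359877912761808794657999937001856983146475027010797954086910578445698230); (-386127116785046047093054893693636497718188035235696517456892607029411829410); (-677441374720705219984141101252287377370697775174187001251162642642289468717); (-644196652397637239694930289852356557038988990271261574850081426247220197416); 64656132689280226782975258273232508473687275695686281263118720407171111936; 798896970458324703178597211856851020178616065081244267257261487283389041262; 1130935667614236336710018806431886345977571263308126643039612107037743959116; 996244679685222343243088523966331939807777630362280386550692229573226247624; 714229431832928326438436675688604311630685366122058339993342417491077449818; 446785557508254815993046570888183392681163437434276691387021354918080992400; 237700850465211901265120233808805781547287167887865474726881598115310040802;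 103109027556574327914253756034900426460267418894620922074267736239810980102; 40611382072332488188529588455613205095254255081034565739488975077927200004; 4992696215104700957285233826137878910156226005255419399003445735736389028; (-7189347980272211018926070921249671246348940535247005590948726816677271659); (-4471545838332337818717034725198963207143562065469982516694719159444458292)].
Definition N_sqr : Z := 36125275534916331198378232232974828057277001454923051635020542521310849716.
Definition u_opp_sqr : seq Z := [:: 475257678060836287322039261746793675438846156629729292137609113923479623; (-407456846998110207874014223581475297998719643001143342637791504047849898); (-902586480738002855672389573563974363007989261404693049588821374222977970); 1195241607407677108932347036276253566169694572042479184055807741032464086; (-920984078253542558907226350245998636853741872692836331398218393578084831); 81724183490851739859059769845729280021279284128195343967278784406219808; 3385767380896608975080897821108758758589757198929182122206505964169182384; (-1929210278513263363758842994210533427899312042992108987501874073731958236); (-7388749874852241368067530520016024594481292491843205693040076604282290237); 4495932147258722782960192646461532437647605589282613430690978432911182022; 18744960995379760291493508272449496066928811100162097445195616544464124921; (-13449129585357934260093945326063519645014371015154059957632429270204535990); (-35447762443220245962817551173654113177461745447976108149537847946335489697); 28453706632797139772330845863050958645290032702318905830751025005431723608; 52116125120058644388365453750535378429850375040393997784114087460593304298; (-43346629459286504357296135124131090312390133328280595210111444746353475434); (-74734255380387996756044797644910064668831410329358155538195606865647667834); 69124783004175916714990573398629643450424294537569881482172315930853457632; 74284235154747512518808136469682396432044312655773491510683811218388857388; (-75605192774394872782106092344970715879071034942952210157786344383620928590); (-34807002345380454157510447519488564259366470375869236794824170617137148904); 41539836179253114179440958041106085713612850428650727035572238262059702692; (-23053765198895552950404723032134392057897620556316440675924045356284875517);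 17767280894352719088410308333088672213621816196842915914746720404608839588; 44944683770231769857372390499878385216071451879786345884759060506458550798; (-43664659512233197052267555982612579741706451302056262065770179835641965456); (-24712064950850880294137816321767939355948700220975246913559255494861737486); 19654310766162996431006945829713210918241871550883268613772807510094133220; 24542086480548298089538259594854420914627515849235555301102527897699473274; (-10660327501825837532743125640229628155939787688683681720737188047950436360); (-82889791724425535891210781185509590057478475412753902500682755013422593234); 62442353218473420583408222846466703971908572681135939017022582393266040222; 161163382477736549472422859385843744927849368341849941880910725384711630218; (-149661264291323352149221887681714892190203167001004554216704238348318364522); (-149390620558203683630806960794399437759796680320345160127763661407287592521); 148448582710663995167958277996698485973384180627218123638772072710910412548; 74562884172103053419123353449867324935227743332522107615251509197192347192; (-75596897013610992182570335259672372139698605004497419673865720533544488812); (-23298879044470821967742390533542492274083394082484983424772238750733002512); 19248130437794712506480622214606212175739634882717305054805977573139418428; 34083698094687723374918694656565986741389565109293801907632099841751994941; (-29468138845375720900764025910897962973728839321684691506682100872019050432); (-49119421421553514189648269116807644910599523506673719494199753421283764713); 51371945664681663160364840093139876790408914648034548816713788624095296496; 17421729071711557604631580745004657930003099196472726980272400588493027155; (-26102756884320066104423448561707695682425720765397800263041023715297197478); 39958010373091746451933922533558139774407672289915182543380484738289079860; (-30045785507419752931634226346490357730963759615779070878077232593745317974); (-75841627496826681859322626467522865498867518467843848192169978645818757107); 69963800702785921429999051025015098885789152490783486390805714106883356788; 69445028339361762740601371412771682616203563722851374440030281760620272225; (-66293300764811542680752900482880960892910707506872074783607644954534610422); (-51435139846876900926715940061076223612880360804614352100215230167870454119);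 49749517594950361347789795610724642129127458072733915762291329471570566320; 34615197344626043646602611898150954692025858406171757631508192633629410190; (-34218112160030752350118364269904895712505250553592417311242941862046295908); (-18626665350828158876676612801865223722848391338378583644760344476963053909); 18798453664268237121866585112705677714019807134862012302127930312797720154; 7919072588822588286304189411542974711219563356817695154539092675786730060; (-7959001530496418701257754797375424545379243143564653554235749778467555628); (-3668113655032876717012975300385375175262580817917174454977551034757502496); 3823220134659760175126967158362366003547265791330988844128045819605500142; 823913691356991433255219200095495664005615116184651028343244680364209085; (-977475672932793971556776008694723593723819115190338982461609950570215846); 566719903612252412060239295963262819661736034814251970431907866874765813; (-540479031441994459646362841449910124655828159902757133406095506102937688); (-414042606546550056822722465549332779607180865872461708316556751001366482); 447234129053976410098206584681233454856723497081488844525211904149792668].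
Definition v_opp_sqr : seq Z := [:: 36980696839342995637789941557356535141890114595902122926443664824520005; (-543058509123562366770064299912112052878972670258315241637426723799109348); 2266719246473745550018037165588431704728054933228513272854900825891197399; 3868934269431456534218681904913932510478080533546426010585281195002219490; 10005207054026824685354846284718825992088320933987912459396339661505585087; 18502954955358982099659065332975681623338280825583278164566428674123534556; 37371758788673754346176968503478390684599674762397198852376936381349035240; 49912829340735918654904903979189266165942975433699884362746543868756629952; 68894343456335925470522353217911893236363598084814047610853437138672198937; 68511993935904732767407706067840030969546468402859978121426410734684742338; 33237518320907365082831132868353225436536962333513531091035353532094358493; (-16912425614945362843908063626221561107825109305200054641762185760703850332); (-46784573908809623375514457982904840218523191153456267386594068819959443722); (-28918672054361165031696415729931370522078610647583389701469882832248593798); (-32631922690060942246722107671306036719459640000644740987492670278366230788); (-75092940398170871664147483305159895073052857508548683977730479014304943728); (-149520862233369385204007885207488015197248284115679105859938785491214359405); (-144089050853338288501267390960705825655819510506138490559256449492956749406); (-77728995110157160609545261106299782811862880941236502579594296522188036415); (-25428963502489428733610008580771611225658014296023369613320750743159267046); (-28253213060789396540682970011642841178143463004123351054832494106743565679); (-43465456831090177670555543750108658228862235333917990732765987313164204390); (-15473277111392029987717482188971714466970394787677239238099102598973607600); 35548259384130897658106327387256267746171202195828705499027786692695008224; 72190118314211369952208550022129932371188041200029862913504960368641158977; 67308865508499703316107255173484407643678543215037678562649413155117408084; 49751594499467556497924170407600433774095075715785627349303951278306558451; 33549411192357343912516195698434278385492044915796143839488949762142718056; 18624426993890671976498069988869781734744536872312316010461655277439669486;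 7739410097058464288306870327909247408261006946022576504659211108210861712; 3611685540142145024644448360573290938397442133352657071848111321231232053; 921330115481118163193601187867342229013466394566191705513997103955877984; (-480425651561402763373690703813134130106266128290515980733867057298218854); (-447234129053976410098206584681233454856723497081488844525211904149792668)].
Definition N_opp_sqr : Z := 512238374900179282959829203304150210580736271225631415064052778747999628.
Definition u_opp : seq Z := [:: 59311300334236936979240; (-242777596908216503694653); 544866494150669944368546; (-950190525966966802862004); 1500254085358361937627024; (-2008464232772316011050231); 2317327262426528141664582; (-2615660495860763747317207); 2912946835411258315769652; (-2132065043820676912701798); (-179261151806900459282438); 2672034777930211816079218; (-3459140417410282264237216); 2870984191094781196524134; (-3479729937923498466040724); 5855774786279664239763985; (-7422120220979249020412910); 5630954855736121478499196; (-2476563462092727244759150); 847823140304211199871295; (-943078551243991541027084); 607774688986601907351964; 1139409160677325467869444; (-2971739789037253750504442); 3529683613424371976673142; (-2883486220819538961197108); 2016365470594230145924372; (-1238861402337448872290997); 621302198668566116775482; (-264270714333514845403021); 104399967550431398953524; (-9669930424943864328134); (-21265026675135917574314); 10632513337567958787157].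
Definition v_opp : seq Z := [:: 59311300334236936979240; 242777596908216503694653; 544866494150669944368546; 950190525966966802862004; 1500254085358361937627024; 2008464232772316011050231; 2317327262426528141664582; 2615660495860763747317207; 2912946835411258315769652; 2132065043820676912701798; (-179261151806900459282438); (-2672034777930211816079218); (-3459140417410282264237216); (-2870984191094781196524134); (-3479729937923498466040724); (-5855774786279664239763985); (-7422120220979249020412910); (-5630954855736121478499196); (-2476563462092727244759150); (-847823140304211199871295); (-943078551243991541027084); (-607774688986601907351964); 1139409160677325467869444; 2971739789037253750504442; 3529683613424371976673142; 2883486220819538961197108; 2016365470594230145924372; 1238861402337448872290997; 621302198668566116775482; 264270714333514845403021; 104399967550431398953524; 9669930424943864328134; (-21265026675135917574314); (-10632513337567958787157)].
Definition N_opp : Z := 118622600668473873958480.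
Definition Xn10 : seq Z := [:: 0; 0; 0; 0; 0; 0; 0; 0; 0; 0; 1].
Definition Xsub1 : seq Z := [:: -1; 1].

Lemma resultant_Qy_Qy_rev :
  zzeq0 (zzsub (zzadd (zzmul res_u Qy) (zzmul res_v Qy_rev))
               [:: zmul Xn10 (zmul Xsub1 (zmul Xsub1 S))]).
Proof. by vm_compute. Qed.

Lemma bezout_S_comp_sqr :
  zeq0 (zsub (zadd (zmul u_sqr S) (zmul v_sqr (zcomp_sqr S))) [:: N_sqr]).
Proof. by vm_compute. Qed.

Lemma bezout_S_comp_opp_sqr :
  zeq0 (zsub (zadd (zmul u_opp_sqr S) (zmul v_opp_sqr (zcomp_sqr (zcomp_opp S))))
             [:: N_opp_sqr]).
Proof. by vm_compute. Qed.

Lemma bezout_S_comp_opp :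
  zeq0 (zsub (zadd (zmul u_opp S) (zmul v_opp (zcomp_opp S))) [:: N_opp]).
Proof. by vm_compute. Qed.

End Certificates.

Lemma hornerQt (R : comNzRingType) t (w : R) :
  (map_poly intr (Qt t)).[w] =
  w ^+ (4*t+7) - w ^+ (4*t+5) - w ^+ (4*t+4) + 2 * w ^+ (2*t+4) + w ^+ (2*t+3)
  + w ^+ (2*t+2) + w ^+ (2*t) - 2 * w ^+ (t+3) - w ^+ 2 - 1.
Proof.
rewrite /Qt !(rmorphB, rmorphD, rmorphM) /= !map_polyXn !map_polyC /= !hornerE.
by rewrite map_polyX hornerX; ring.
Qed.

Lemma zzhorner_Qy (R : comNzRingType) t (w : R) :
  zzhorner w Qy (w ^+ t) = (map_poly intr (Qt t)).[w].
Proof. rewrite hornerQt /zzhorner /zhorner; zhorner_literal; rewrite !exprD; ring. Qed.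

Lemma zzhorner_Qy_rev (F : fieldType) t (w : F) : w != 0 ->
  zzhorner w Qy_rev (w ^+ t) = w ^+ 7 * w ^+ (4*t) * (map_poly intr (Qt t)).[w^-1].
Proof.
move=> w0; rewrite hornerQt /zzhorner /zhorner; zhorner_literal.
rewrite !exprD !exprVn.
by field; rewrite w0 expf_neq0 ?oner_neq0.
Qed.

Lemma Cyclotomic_dvd_root b (p : {poly int}) (w : algC) :
  'Phi_b %| p -> b.-primitive_root w -> (map_poly intr p).[w] = 0.
Proof.
move=> /(Pdiv.IdomainMonic.dvdpP (Cyclotomic_monic b)) [q ->] pw.
have := root_cyclotomic pw w; rewrite pw -(Cintr_Cyclotomic pw) => /rootP Phi0.
by rewrite rmorphM hornerM Phi0 mulr0.
Qed.

Lemma prim_root_inv (F : fieldType) b (w : F) :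
  b.-primitive_root w -> b.-primitive_root w^-1.
Proof.
move=> pw; have b0 := prim_order_gt0 pw.
have w0 : w != 0 by rewrite (prim_root_eq0 pw) -lt0n.
have -> : w^-1 = w ^+ b.-1.
  by apply: (mulfI w0); rewrite mulfV // -exprS prednK ?(prim_expr_order pw).
by rewrite prim_root_exp_coprime // coprimePn.
Qed.

Lemma prim_root_half (R : idomainType) m (z : R) :
  (m * 2).-primitive_root z -> z ^+ m = -1.
Proof.
move=> pz; have m0 : (0 < m)%N by have := prim_order_gt0 pz; rewrite muln_gt0 => /andP[].
have /eqP := prim_expr_order pz; rewrite exprM sqrf_eq1 => /orP[|/eqP //].
rewrite -(prim_order_dvd pz) => /(dvdn_leq m0).
by rewrite leqNgt ltn_Pmulr.
Qed.

Lemma Cyclotomic_dvd_Qt_root_S b t (w : algC) :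
  (2 <= b)%N -> 'Phi_b %| Qt t -> b.-primitive_root w -> zhorner S w = 0.
Proof.
move=> b2 dvdQ pw.
have w0 : w != 0 by rewrite (prim_root_eq0 pw) -lt0n ltnW.
have w1 : w != 1.
  apply: contraTneq b2 => w1; rewrite -ltnNge ltnS dvdn_leq //.
  by rewrite (prim_order_dvd pw) w1 expr1n.
have Qy0 : zzhorner w Qy (w ^+ t) = 0.
  by rewrite zzhorner_Qy (Cyclotomic_dvd_root dvdQ pw).
have Qy_rev0 : zzhorner w Qy_rev (w ^+ t) = 0.
  by rewrite zzhorner_Qy_rev // (Cyclotomic_dvd_root dvdQ (prim_root_inv pw)) mulr0.
have := zzhorner_eq w (w ^+ t) resultant_Qy_Qy_rev.
rewrite zzhornerD !zzhornerM Qy0 Qy_rev0 !mulr0 addr0 zzhorner_const !zhornerM.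
have -> : zhorner Xn10 w = w ^+ 10 by rewrite /zhorner; zhorner_literal; ring.
have -> : zhorner Xsub1 w = w - 1 by rewrite /zhorner; zhorner_literal; ring.
move/esym/eqP; rewrite mulf_eq0 expf_eq0 !mulf_eq0 subr_eq0 (negbTE w0) (negbTE w1) /=.
by move/eqP.
Qed.

Lemma coprime_add_double m k : coprime (m + k) (m * 2) = coprime k m && odd (m + k).
Proof. by rewrite coprimeMr coprimen2 /coprime gcdnC gcdnDl gcdnC. Qed.

Theorem mainTheorem4 (t b : nat) : (2 <= b)%N -> ~~ ('Phi_b %| Qt t).
Proof.
move=> b2; apply/negP => dvdQ.
have [z pz] := C_prim_root_exists (ltnW b2).
have rootS k : coprime k b -> zhorner S (z ^+ k) = 0.
  by move=> kb; apply: (Cyclotomic_dvd_Qt_root_S b2 dvdQ); rewrite prim_root_exp_coprime.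
have Sz : zhorner S z = 0 by rewrite -[z]expr1 rootS ?coprime1n.
have [b_odd | b_even] := boolP (odd b).
  apply: (zhorner_no_common_root bezout_S_comp_sqr _ Sz) => //.
  by rewrite zhorner_comp_sqr rootS ?coprime2n.
have bE : b = (b./2 * 2)%N by rewrite muln2 halfK (negbTE b_even) subn0.
set m := b./2 in bE; rewrite bE in pz rootS.
have zm : z ^+ m = -1 := prim_root_half pz.
have [m_odd | m_even] := boolP (odd m).
  apply: (zhorner_no_common_root bezout_S_comp_opp_sqr _ Sz) => //.
  rewrite zhorner_comp_sqr zhorner_comp_opp.
  have -> : - z ^+ 2 = z ^+ (m + 2) by rewrite exprD zm mulN1r.
  by rewrite rootS // coprime_add_double coprime2n oddD m_odd.
apply: (zhorner_no_common_root bezout_S_comp_opp _ Sz) => //.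
rewrite zhorner_comp_opp.
have -> : - z = z ^+ (m + 1) by rewrite exprD zm mulN1r.
by rewrite rootS // coprime_add_double coprime1n oddD (negbTE m_even).
Qed.
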